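(* Let $(a_n)_{n\ge1}$ be an increasing sequence of natural numbers with $a_n\mid a_{n+1}$ and $\rho:=\sum_{n\ge1}1/a_n\le 1/4$. Define subsets $A_n\subset\mathbb N_0$, $n\in\mathbb N_0$, inductively: $A_0=\{ka_1:k\in\mathbb N_0\}$; for $n>0$, if $n\in A_m$ for some $m<n$ put $A_n=A_m$, and otherwise put $A_n=\{n+ka_{n+1}:k\in\mathbb N_0\}$. Define $z(n)=\boldsymbol\mu(\min A_n)$ for $n\in\mathbb N_0$, with the convention $\boldsymbol\mu(0):=0$. Then $$\liminf_{N\to\infty}\frac1N\sum_{k=1}^N z(k)\boldsymbol\mu(k)\ \ge\ \frac{6}{\pi^2}-2\rho>0.$$
   Context: $\boldsymbol\mu$ is the Möbius function: $\boldsymbol\mu(1)=1$, $\boldsymbol\mu(n)=0$ if $n$ is not square-free, $\boldsymbol\mu(p_1\cdots p_k)=(-1)^k$ for distinct primes $p_1,\dots,p_k$; here additionally $\boldsymbol\mu(0):=0$. $\mathbb N_0=\{0,1,2,\dots\}$. *)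

From HB Require Import structures.
From mathcomp Require Import all_boot all_order all_algebra.
From mathcomp Require Import all_classical all_reals all_analysis.
Set Implicit Arguments. Unset Strict Implicit. Unset Printing Implicit Defensive.
Import Order.TTheory GRing.Theory Num.Theory.

Definition squarefree (n : nat) : bool := all (fun p => logn p n == 1%N) (primes n).
Definition moebius (n : nat) : int :=
  if n == 0%N then 0%R
  else if squarefree n then ((-1) ^+ size (primes n))%R else 0%R.

(* An arithmetic progression {r + k d : k in N_0} is represented by (r, d). *)
Definition inAP (n : nat) (p : nat * nat) : bool :=
  (p.1 <= n) && (p.2 %| (n - p.1)).

(* Given the list l = [A_0; ...; A_{n-1}], compute A_n.
   If n ∈ A_m for some m < n, A_n := A_m (the least such m; the sets turn out
   to be pairwise disjoint or equal, so the choice is immaterial);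
   otherwise A_n := {n + k a_{n+1}}. *)
Definition nextA (a : nat -> nat) (l : seq (nat * nat)) (n : nat) : nat * nat :=
  if n == 0%N then (0%N, a 1%N)
  else match [seq p <- l | inAP n p] with
       | p :: _ => p
       | [::] => (n, a n.+1)
       end.

Fixpoint Alist (a : nat -> nat) (n : nat) : seq (nat * nat) :=
  match n with
  | 0 => [::]
  | n'.+1 => let l := Alist a n' in rcons l (nextA a l n')
  end.

Definition Aset (a : nat -> nat) (n : nat) : nat * nat := nth (0%N, 0%N) (Alist a n.+1) n.

Definition zfun (a : nat -> nat) (n : nat) : int := moebius (Aset a n).1.

From HB Require Import structures.
From mathcomp Require Import all_boot all_order all_algebra.
From mathcomp Require Import all_classical all_reals all_analysis.
From mathcomp Require Import ring lra zify.
Import Order.TTheory GRing.Theory Num.Theory numFieldNormedType.Exports.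
Set Implicit Arguments. Unset Strict Implicit. Unset Printing Implicit Defensive.

(* Since mu(k)^2 is the indicator of squarefreeness and mu takes values in {-1, 0, 1},
   z(k) mu(k) >= mu(k)^2 - 2 [min A_k <> k].  If r := min A_k < k then a_{r+1}
   divides k - r, so at most sum_r N / a_{r+1} <= rho N integers k <= N have
   min A_k <> k.  It remains to see that the squarefree numbers have lower density
   at least 6/pi^2.  Writing k = d^2 s with s squarefree gives
   sum_d Q(N / d^2) = N for their counting function Q.  Together with
   sum_{d >= 1} 1/d^2 <= pi^2/6, which follows from
   sum_{k < 2^n} 1 / sin^2((2k+1) pi / 2^(n+1)) = 4^n and sin x <= x, a linear lower
   bound Q(M) >= l M - B yields a linear upper bound and then an improved lower
   bound.  Hence the supremum q of the admissible l satisfies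
   q >= (1 - c - 1/D) / (1 - c^2) with c = sum_{2 <= d <= D} 1/d^2, and letting D
   grow gives q >= 6/pi^2. *)

(* Unlike [squarefree], [sqfree] excludes 0. *)
Definition sqfree (k : nat) : bool := moebius k != 0%R.

Lemma squarefreeP k : 0 < k ->
  reflect (forall p, prime p -> ~~ (p * p %| k)) (squarefree k).
Proof.
move=> k0; apply: (iffP allP) => /= H.
  move=> p pp; apply/negP => pp_dvd.
  have pk : p \in primes k.
    by rewrite mem_primes pp k0 (dvdn_trans (dvdn_mulr p (dvdnn p)) pp_dvd).
  by move: pp_dvd; rewrite mulnn pfactor_dvdn // (eqP (H p pk)).
move=> p; rewrite mem_primes => /and3P[pp _ pk].
have := H p pp; rewrite mulnn pfactor_dvdn // -ltnNge ltnS => le1.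
by rewrite eqn_leq le1 logn_gt0 mem_primes pp k0.
Qed.

Lemma sqfreeP k : reflect (0 < k /\ forall d, 1 < d -> ~~ (d * d %| k)) (sqfree k).
Proof.
have -> : sqfree k = (0 < k) && squarefree k.
  rewrite /sqfree /moebius; case: k => [|k] //=.
  by case: squarefree; rewrite ?expf_neq0 ?oppr_eq0 ?oner_eq0.
apply: (iffP andP) => -[k0 H]; split => //.
  move=> d d1; apply/negP => dd_dvd.
  have /negP := (squarefreeP k0 H) _ (pdiv_prime d1); apply.
  by apply: dvdn_trans dd_dvd; apply: dvdn_mul; apply: pdiv_dvd.
by apply/squarefreeP => // p pp; apply/H/prime_gt1.
Qed.

Lemma logn_sqfree p s : sqfree s -> logn p s <= 1.
Proof.
move=> /sqfreeP[s0 H]; rewrite leqNgt; apply/negP => log_gt1.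
have pp : prime p by move: (ltnW log_gt1); rewrite logn_gt0 mem_primes => /andP[].
by have := H p (prime_gt1 pp); rewrite mulnn pfactor_dvdn // log_gt1.
Qed.

Definition square_part (k d : nat) : bool := (d * d %| k) && sqfree (k %/ (d * d)).

Lemma square_part_gt0 k d : 0 < k -> square_part k d -> 0 < d.
Proof.
by move=> k0 /andP[]; case: d => //; rewrite muln0 dvd0n => /eqP k_eq0; rewrite k_eq0 in k0.
Qed.

Lemma square_part_le k d : 0 < k -> square_part k d -> d <= k.
Proof.
move=> k0 dk; have d0 := square_part_gt0 k0 dk; case/andP: dk => dd_dvd _.
by apply: leq_trans (dvdn_leq k0 dd_dvd); apply: leq_pmulr.
Qed.

(* The largest d with d^2 | k leaves a squarefree cofactor. *)
Lemma square_part_exists k : 0 < k -> exists d, square_part k d.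
Proof.
move=> k0; pose P d := (0 < d) && (d * d %| k).
have exP : exists d, P d by exists 1; rewrite /P mul1n dvd1n.
have ubP d : P d -> d <= k.
  by case/andP=> d0 dd_dvd; apply: leq_trans (dvdn_leq k0 dd_dvd); apply: leq_pmulr.
case: (ex_maxnP exP ubP) => d /andP[d0 dd_dvd] dmax.
exists d; rewrite /square_part dd_dvd; apply/sqfreeP; split.
  by rewrite divn_gt0 ?muln_gt0 ?d0 // dvdn_leq.
move=> e e1; apply/negP => ee_dvd.
have : P (d * e).
  rewrite /P muln_gt0 d0 (ltn_trans _ e1) //= -(divnK dd_dvd) mulnACA mulnC.
  exact: dvdn_mul.
by move/dmax; rewrite leqNgt ltn_Pmulr.
Qed.

(* Compare p-adic valuations: logn p k = logn p s + 2 logn p d with logn p s <= 1. *)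
Lemma square_part_uniq k d1 d2 : 0 < k -> square_part k d1 -> square_part k d2 -> d1 = d2.
Proof.
move=> k0 k_d1 k_d2.
have d1_gt0 := square_part_gt0 k0 k_d1; have d2_gt0 := square_part_gt0 k0 k_d2.
case/andP: k_d1 => dvd1 sq1; case/andP: k_d2 => dvd2 sq2.
have cofactor_gt0 d : 0 < d -> d * d %| k -> 0 < k %/ (d * d).
  by move=> d0 dd_dvd; rewrite divn_gt0 ?muln_gt0 ?d0 // dvdn_leq.
have lognE d p : 0 < d -> d * d %| k ->
    logn p k = logn p (k %/ (d * d)) + (logn p d + logn p d).
  by move=> d0 dd_dvd; rewrite -{1}(divnK dd_dvd) lognM ?cofactor_gt0 ?muln_gt0 ?d0 // lognM.
apply: eqn_from_log => // p.
have := logn_sqfree p sq1; have := logn_sqfree p sq2.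
have := lognE _ p d1_gt0 dvd1; have := lognE _ p d2_gt0 dvd2.
lia.
Qed.

Definition count_sqfree (M : nat) : nat := \sum_(1 <= s < M.+1) sqfree s.

Lemma count_sqfree0 : count_sqfree 0 = 0.
Proof. by rewrite /count_sqfree big_geq. Qed.

Lemma count_sqfree_le M : count_sqfree M <= M.
Proof.
apply: leq_trans (_ : \sum_(1 <= s < M.+1) 1 <= M).
  by apply: leq_sum => s _; case: sqfree.
by rewrite sum_nat_const_nat subn1 muln1.
Qed.

Lemma sum_dvdn_divn m (F : nat -> nat) N : 0 < m ->
  \sum_(1 <= k < N.+1) (m %| k) * F (k %/ m) = \sum_(1 <= s < (N %/ m).+1) F s.
Proof.
move=> m0; elim: N => [|N IH]; first by rewrite div0n !big_geq.
rewrite big_nat_recr //= IH divnS //.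
case: (boolP (m %| N.+1)) => /= m_dvd; last by rewrite mul0n addn0.
by rewrite mul1n add1n [in RHS]big_nat_recr.
Qed.

Lemma sum_square_part k K : 0 < k -> k <= K -> \sum_(1 <= d < K.+1) square_part k d = 1.
Proof.
move=> k0 kK; have [d0 k_d0] := square_part_exists k0.
have d0_gt0 := square_part_gt0 k0 k_d0; have d0K := leq_trans (square_part_le k0 k_d0) kK.
rewrite (bigD1_seq d0) /=; first last.
- exact: iota_uniq.
- by rewrite mem_iota d0_gt0; lia.
rewrite k_d0 big1 // => d d_neq.
suff -> : square_part k d = false by []; apply/negP => k_d.
by move/eqP: d_neq; apply; apply: square_part_uniq k_d k_d0.
Qed.

Lemma sum_count_sqfree_div_sq N K : N <= K ->
  \sum_(1 <= d < K.+1) count_sqfree (N %/ (d * d)) = N.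
Proof.
move=> NK.
have -> : \sum_(1 <= d < K.+1) count_sqfree (N %/ (d * d)) =
          \sum_(1 <= d < K.+1) \sum_(1 <= k < N.+1) square_part k d.
  apply: eq_big_nat => d /andP[d0 _].
  rewrite /count_sqfree -sum_dvdn_divn ?muln_gt0 ?d0 //.
  by apply: eq_bigr => k _; rewrite /square_part -mulnb.
rewrite exchange_big_nat /= (eq_big_nat _ _ (F2 := fun _ => 1)).
  by rewrite sum_nat_const_nat subn1 muln1.
by move=> k /andP[k0 kN]; apply: sum_square_part => //; apply: leq_trans NK; rewrite -ltnS.
Qed.

Section Progressions.
Variable a : nat -> nat.

Lemma size_Alist n : size (Alist a n) = n.
Proof. by elim: n => //= n IH; rewrite size_rcons IH. Qed.

Lemma Alist_modulus n p : p \in Alist a n -> p.2 = a p.1.+1.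
Proof.
elim: n p => //= n IH p; rewrite mem_rcons inE => /predU1P[->|/IH //].
rewrite /nextA; case: eqP => //= _.
case E: [seq q <- Alist a n | inAP n q] => [|q s] //=.
have : q \in [seq q <- Alist a n | inAP n q] by rewrite E mem_head.
by rewrite mem_filter => /andP[_ /IH].
Qed.

Lemma AsetE n : Aset a n = nextA a (Alist a n) n.
Proof. by rewrite /Aset /= nth_rcons size_Alist ltnn eqxx. Qed.

Lemma Aset_progression n : 0 < n ->
  (Aset a n).1 <= n /\ a (Aset a n).1.+1 %| n - (Aset a n).1.
Proof.
move=> n0; rewrite AsetE /nextA (negPf (lt0n_neq0 n0)).
case E: [seq p <- Alist a n | inAP n p] => [|q s] /=; first by rewrite leqnn subnn dvdn0.
have : q \in [seq p <- Alist a n | inAP n p] by rewrite E mem_head.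
by rewrite mem_filter => /andP[/andP[-> +] /Alist_modulus <-].
Qed.

Lemma sum_progression_count b r N : 0 < b ->
  \sum_(1 <= k < N.+1) ((r < k) && (b %| k - r)) = (N - r) %/ b.
Proof.
move=> b0; elim: N => [|N IH]; first by rewrite big_geq // sub0n div0n.
rewrite big_nat_recr //= IH; case: (leqP r N) => rN.
  by rewrite ltnS rN subSn // divnS // addnC.
have -> : (r < N.+1) = false by apply/negbTE; rewrite -leqNgt.
have -> : N - r = 0 by lia.
have -> : N.+1 - r = 0 by lia.
by rewrite addn0.
Qed.

(* A moved k (min A_k = r < k) lies in the progression r + a_{r+1} N_0. *)
Lemma Aset_moved_le k N : 0 < k -> k <= N ->
  ((Aset a k).1 != k) <= \sum_(0 <= r < N) ((r < k) && (a r.+1 %| k - r)).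
Proof.
move=> k0 kN; case: eqP => //= /eqP moved.
have [min_le dvd_diff] := Aset_progression k0.
have min_lt : (Aset a k).1 < k by rewrite ltn_neqAle moved min_le.
rewrite (bigD1_seq (Aset a k).1) /=; first last.
- exact: iota_uniq.
- by rewrite mem_iota; lia.
by rewrite min_lt dvd_diff.
Qed.

Lemma count_Aset_moved N : (forall n, 0 < n -> 0 < a n) ->
  \sum_(1 <= k < N.+1) ((Aset a k).1 != k) <= \sum_(0 <= r < N) (N - r) %/ a r.+1.
Proof.
move=> apos.
apply: (@leq_trans (\sum_(1 <= k < N.+1) \sum_(0 <= r < N) ((r < k) && (a r.+1 %| k - r)))).
  rewrite big_nat_cond [leqRHS]big_nat_cond.
  by apply: leq_sum => k /andP[/andP[k0 kN] _]; apply: Aset_moved_le.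
rewrite exchange_big_nat /=; apply/eq_leq/eq_bigr => r _.
exact/sum_progression_count/apos.
Qed.

End Progressions.

Local Open Scope classical_set_scope.
Local Open Scope ring_scope.

Lemma moebius_sign n : moebius n = 0 \/ exists m, moebius n = (-1) ^+ m.
Proof.
rewrite /moebius; case: eqP => _; first by left.
by case: squarefree; [right; eexists | left].
Qed.

Lemma moebius_mul_geN1 n m : -1 <= moebius n * moebius m.
Proof.
case: (moebius_sign n) => [->|[i ->]]; first by rewrite mul0r.
case: (moebius_sign m) => [->|[j ->]]; first by rewrite mulr0.
by rewrite -exprD -signr_odd; case: odd.
Qed.

Lemma moebius_sqr n : moebius n * moebius n = sqfree n.
Proof.
rewrite /sqfree; case: (moebius_sign n) => [->|[i ->]]; first by rewrite mulr0 eqxx.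
by rewrite -exprD addnn expf_neq0 ?oppr_eq0 ?oner_eq0 // -signr_odd odd_double.
Qed.

Lemma zfun_moebius_ge a k :
  (sqfree k)%:Z - 2 * ((Aset a k).1 != k)%:Z <= zfun a k * moebius k.
Proof.
rewrite /zfun; case: eqP => [->|_] /=; first by rewrite moebius_sqr subr0.
by have := moebius_mul_geN1 (Aset a k).1 k; case: sqfree => /=; lia.
Qed.

Lemma sum_zfun_moebius_ge (R : realType) a N : (forall n, (0 < n)%N -> (0 < a n)%N) ->
  (count_sqfree N)%:R - 2 * (N%:R * \sum_(0 <= r < N) (a r.+1)%:R^-1) <=
  \sum_(1 <= k < N.+1) ((zfun a k * moebius k)%:~R : R).
Proof.
move=> apos.
have moved_le : \sum_(1 <= k < N.+1) ((Aset a k).1 != k)%:R <=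
                N%:R * \sum_(0 <= r < N) (a r.+1)%:R^-1 :> R.
  rewrite -natr_sum; apply: le_trans (_ : (\sum_(0 <= r < N) (N - r) %/ a r.+1)%:R <= _).
    by rewrite ler_nat count_Aset_moved.
  rewrite natr_sum mulr_sumr; apply: ler_sum => r _.
  rewrite ler_pdivlMr ?ltr0n ?apos // -natrM ler_nat.
  exact: leq_trans (leq_divM _ _) (leq_subr _ _).
apply: le_trans (_ : (count_sqfree N)%:R -
    2 * \sum_(1 <= k < N.+1) ((Aset a k).1 != k)%:R <= _).
  by rewrite lerD2l lerN2 ler_pM2l.
rewrite /count_sqfree natr_sum mulr_sumr -sumrB; apply: ler_sum => k _.
have := zfun_moebius_ge a k; rewrite -(ler_int R) => h; apply: le_trans h.
by rewrite rmorphB /= rmorphM /= !mulrz_nat.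
Qed.

Section Basel.
Variable R : realType.

Lemma sin_le_id (x : R) : 0 <= x -> sin x <= x.
Proof.
rewrite le_eqVlt => /predU1P[<-|x0]; first by rewrite sin0.
have [c _ h] := @MVT R sin cos 0 x x0 (fun y _ => is_derive_sin y)
   (continuous_subspaceT (@continuous_sin R)).
move: h; rewrite sin0 !subr0 => ->.
by rewrite ler_piMl ?cos_le1 ?ltW.
Qed.

Lemma mul_cos_lt_sin (x : R) : 0 < x < pi -> x * cos x < sin x.
Proof.
move=> /andP[x0 xpi].
pose g (y : R) := sin y - y * cos y.
have g_derive y : is_derive y (1 : R) g (y * sin y).
  by apply: trigger_derive; rewrite /GRing.scale /=; ring.
have g_cont : {within `[0, x], continuous g}.
  apply: continuous_subspaceT => y.
  by apply/differentiable_continuous/derivable1_diffP; case: (g_derive y).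
have [c + h] := MVT x0 (fun y _ => g_derive y) g_cont.
rewrite in_itv /= => /andP[c0 cx]; move: h; rewrite /g sin0 cos0 mul0r !subr0 => h.
rewrite -subr_gt0 h mulr_gt0 // mulr_gt0 //.
by apply: sin_gt0_pi; rewrite c0 (lt_trans cx xpi).
Qed.

(* Evaluate [mul_cos_lt_sin] at pi/6, where sin = 1/2 and cos^2 = 3/4. *)
Lemma pi_sq_lt12 : (pi : R) ^+ 2 < 12.
Proof.
set y : R := pi / 6.
have pi0 : (0 : R) < pi := pi_gt0 R.
have y_gt0 : 0 < y by rewrite divr_gt0.
have y_ltpi : y < pi by rewrite ltr_pdivrMr //; lra.
have cos_gt0 : 0 < cos y by apply: cos_gt0_pihalf; apply/andP; split; rewrite /y; lra.
have sin3y : sin (y + y + y) = 1.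
  by rewrite (_ : y + y + y = pi / 2) ?sin_pihalf // /y; field.
move: sin3y (cos2Dsin2 y) (cos_gt0); rewrite !sinD !cosD.
set s := sin y; set c := cos y => sin3y sc c_gt0.
have sin_half : s = 1 / 2.
  have : (s + 1) * (2 * s - 1) ^+ 2 = 0.
    have -> : (s + 1) * (2 * s - 1) ^+ 2 =
      (1 - ((s * c + c * s) * c + (c * c - s * s) * s)) + 3 * s * (c ^+ 2 + s ^+ 2 - 1)
      by ring.
    by rewrite sin3y sc; ring.
  have s_gt0 : 0 < s by apply: sin_gt0_pi; rewrite y_gt0 y_ltpi.
  by move/eqP; rewrite mulf_eq0 sqrf_eq0 => /orP[] /eqP; lra.
have cos_sq : c ^+ 2 = 3 / 4 by rewrite sin_half in sc; lra.
have : y * c < s by apply: mul_cos_lt_sin; rewrite y_gt0 y_ltpi.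
rewrite sin_half /y => h.
have : (pi * c) ^+ 2 < 3 ^+ 2.
  by rewrite ltr_pXn2r ?nnegrE ?mulr_ge0 ?ltW //; lra.
by rewrite exprMn cos_sq; lra.
Qed.

Lemma pi_sq_ge4 : 4 <= (pi : R) ^+ 2.
Proof. by have := pi_ge2 R; rewrite expr2; nra. Qed.

Definition dyadic_angle (n k : nat) : R := (k.*2.+1)%:R * pi / 2 ^+ n.+1.

Lemma inv_sin2_half (x : R) : sin x != 0 ->
  (sin x ^+ 2)^-1 = (sin (x / 2) ^+ 2)^-1 / 4 + (sin (x / 2 + pi / 2) ^+ 2)^-1 / 4.
Proof.
rewrite sinDpihalf.
have hx : x = (x / 2) *+ 2 by rewrite -mulr_natr mulfVK.
rewrite {1}hx {2}hx sin_mulr2n -mulr_natr.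
set s := sin (x / 2); set c := cos (x / 2).
move=> /negPf; rewrite !mulf_eq0 pnatr_eq0 orbF => /norP[c0 s0].
have -> : (s ^+ 2)^-1 / 4 + (c ^+ 2)^-1 / 4 = (c ^+ 2 + s ^+ 2) / (c * s * 2) ^+ 2.
  by field; rewrite c0 s0.
by rewrite cos2Dsin2 div1r.
Qed.

Lemma dyadic_angle_gt0_ltpi n k : (k < 2 ^ n)%N -> 0 < dyadic_angle n k < pi.
Proof.
move=> hk; have pi0 : (0 : R) < pi := pi_gt0 R.
have h2 : (0 : R) < 2 ^+ n.+1 by apply: exprn_gt0.
rewrite /dyadic_angle divr_gt0 ?mulr_gt0 //= ltr_pdivrMr // mulrC ltr_pM2l //.
by rewrite -natrX ltr_nat expnS mul2n -doubleS leq_double.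
Qed.

Lemma dyadic_angleS n k : dyadic_angle n.+1 k = dyadic_angle n k / 2.
Proof. by rewrite /dyadic_angle exprSr; field; rewrite expf_neq0. Qed.

Lemma dyadic_angleS_shift n k :
  dyadic_angle n.+1 (k + 2 ^ n) = dyadic_angle n k / 2 + pi / 2.
Proof.
rewrite /dyadic_angle doubleD -addSn natrD -[(2 ^ n).*2]mul2n natrM natrX !exprS.
by field; rewrite expf_neq0.
Qed.

Lemma dyadic_angle_reflect n k j : (k + j).+1 = (2 ^ n)%N ->
  pi - dyadic_angle n.+1 (k + 2 ^ n) = dyadic_angle n.+1 j.
Proof.
move=> e.
have e2 : ((k + 2 ^ n).*2.+1 + j.*2.+1 = 2 ^ n.+2)%N by rewrite !expnS -e; lia.
rewrite /dyadic_angle.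
have -> : ((j.*2.+1)%:R : R) = 2 ^+ n.+2 - ((k + 2 ^ n).*2.+1)%:R.
  by rewrite -natrX -e2 natrD addrC addKr.
by field; rewrite expf_neq0.
Qed.

Lemma inv_dyadic_angle2 n k : (dyadic_angle n k ^+ 2)^-1 =
  4 ^+ n.+1 / pi ^+ 2 * ((k.*2.+1)%:R ^+ 2)^-1.
Proof.
have pi0 : (pi : R) != 0 by rewrite gt_eqF // pi_gt0.
have k0 : ((k.*2.+1)%:R : R) != 0 by rewrite pnatr_eq0.
have -> : (4 : R) ^+ n.+1 = (2 ^+ n.+1) ^+ 2.
  by rewrite -exprM mulnC exprM; congr (_ ^+ _); rewrite expr2 -natrM.
rewrite /dyadic_angle; move: pi0 k0; move: (pi : R) ((k.*2.+1)%:R : R) => p m p0 m0.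
by field; rewrite p0 m0 expf_neq0.
Qed.

Lemma split_sum_pow2 (F : nat -> R) n :
  \sum_(0 <= k < 2 ^ n.+1) F k =
  \sum_(0 <= k < 2 ^ n) F k + \sum_(0 <= k < 2 ^ n) F (k + 2 ^ n)%N.
Proof.
rewrite expnS mul2n -addnn (@big_cat_nat _ _ _ (2 ^ n)) ?leq_addr //=.
by rewrite -{2}(add0n (2 ^ n)%N) big_addn addnK.
Qed.

(* By [inv_sin2_half], each term of level n splits into two terms of level n + 1. *)
Lemma sum_inv_sin2_dyadic n :
  \sum_(0 <= k < 2 ^ n) (sin (dyadic_angle n k) ^+ 2)^-1 = 4 ^+ n.
Proof.
elim: n => [|n IH].
  by rewrite expn0 big_nat1 /dyadic_angle mul1r expr1 sin_pihalf expr1n invr1.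
rewrite split_sum_pow2 -big_split /= exprS -IH mulr_sumr.
apply: eq_big_nat => k /andP[_ hk].
rewrite dyadic_angleS dyadic_angleS_shift (@inv_sin2_half (dyadic_angle n k)).
  by rewrite mulrDr ![4 * _]mulrC !divfK // pnatr_eq0.
by rewrite gt_eqF //; apply: sin_gt0_pi; apply: dyadic_angle_gt0_ltpi.
Qed.

Lemma inv_sqr_le (x y : R) : 0 < x -> x <= y -> (y ^+ 2)^-1 <= (x ^+ 2)^-1.
Proof.
move=> x0 xy; have y0 := lt_le_trans x0 xy.
by rewrite lef_pV2 ?posrE ?exprn_gt0 // !expr2; nra.
Qed.

Lemma inv_sin2_dyadic_ge n k : (k < 2 ^ n)%N ->
  (dyadic_angle n k ^+ 2)^-1 <= (sin (dyadic_angle n k) ^+ 2)^-1 /\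
  ((pi - dyadic_angle n k) ^+ 2)^-1 <= (sin (dyadic_angle n k) ^+ 2)^-1.
Proof.
move=> /dyadic_angle_gt0_ltpi /andP[x0 xpi].
have s0 : 0 < sin (dyadic_angle n k) by apply: sin_gt0_pi; rewrite x0 xpi.
split; apply: inv_sqr_le => //; first exact/sin_le_id/ltW.
have -> : sin (dyadic_angle n k) = sin (pi - dyadic_angle n k).
  by rewrite sinB cospi sinpi; ring.
by apply: sin_le_id; rewrite subr_ge0 ltW.
Qed.

Definition zeta2_sum (D : nat) : R := \sum_(1 <= d < D.+1) (d%:R ^+ 2)^-1.
Definition odd_zeta2_sum (m : nat) : R := \sum_(0 <= k < m) ((k.*2.+1)%:R ^+ 2)^-1.

(* Both halves of the level-(n+1) dyadic sum dominate the odd sum, by sin x <= x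
   and sin x = sin (pi - x). *)
Lemma odd_zeta2_sum_pow2_le n : odd_zeta2_sum (2 ^ n) <= pi ^+ 2 / 8.
Proof.
have := sum_inv_sin2_dyadic n.+1; rewrite split_sum_pow2 => sum_eq.
set g := fun k => (dyadic_angle n.+1 k ^+ 2)^-1.
have lt_pow k : (k < 2 ^ n -> k < 2 ^ n.+1)%N.
  by move=> hk; rewrite expnS mul2n -addnn ltn_addr.
have le_fst : \sum_(0 <= k < 2 ^ n) g k <=
    \sum_(0 <= k < 2 ^ n) (sin (dyadic_angle n.+1 k) ^+ 2)^-1.
  by apply: ler_sum_nat => k /andP[_ /lt_pow hk]; apply: (inv_sin2_dyadic_ge hk).1.
have le_snd : \sum_(0 <= k < 2 ^ n) g k <=
    \sum_(0 <= k < 2 ^ n) (sin (dyadic_angle n.+1 (k + 2 ^ n)) ^+ 2)^-1.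
  rewrite big_nat_rev /=; apply: ler_sum_nat => k /andP[_ hk].
  rewrite /g add0n -(@dyadic_angle_reflect n k); last by lia.
  by apply: (inv_sin2_dyadic_ge _).2; rewrite expnS mul2n -addnn ltn_add2r.
have g_sum : \sum_(0 <= k < 2 ^ n) g k = 4 ^+ n.+2 / pi ^+ 2 * odd_zeta2_sum (2 ^ n).
  by rewrite mulr_sumr; apply: eq_bigr => k _; rewrite /g inv_dyadic_angle2.
have := lerD le_fst le_snd; rewrite sum_eq g_sum.
have pi0 : (0 : R) < pi ^+ 2 by rewrite exprn_gt0 // pi_gt0.
have X0 : (0 : R) < 4 ^+ n.+1 by rewrite exprn_gt0.
rewrite exprS; move: (4 ^+ n.+1 : R) (pi ^+ 2 : R) pi0 X0 => X P P0 X0 h.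
set O := odd_zeta2_sum _ in h *.
rewrite ler_pdivlMr // -(ler_pM2l X0).
have -> : X * (O * 8) = (4 * X / P * O + 4 * X / P * O) * P by field; rewrite gt_eqF.
by rewrite ler_pM2r.
Qed.

Lemma ler_sum_nat_widen (F : nat -> R) i m n : (forall k, 0 <= F k) ->
  (m <= n)%N -> \sum_(i <= k < m) F k <= \sum_(i <= k < n) F k.
Proof.
move=> F0 mn; case: (leqP i m) => im; last by rewrite big_geq ?sumr_ge0 // ltnW.
by rewrite (@big_cat_nat _ _ _ m i n) //= lerDl sumr_ge0.
Qed.

Lemma odd_zeta2_sum_le m : odd_zeta2_sum m <= pi ^+ 2 / 8.
Proof.
apply: le_trans (odd_zeta2_sum_pow2_le m).
apply: ler_sum_nat_widen => [k|]; first by rewrite invr_ge0 exprn_ge0.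
exact/ltnW/ltn_expl.
Qed.

(* Splitting into odd and even d: zeta2_sum (2 M) = odd_zeta2_sum M + zeta2_sum M / 4. *)
Lemma zeta2_sum_le D : zeta2_sum D <= pi ^+ 2 / 6.
Proof.
have split_parity M : zeta2_sum M.*2 = odd_zeta2_sum M + zeta2_sum M / 4.
  elim: M => [|M IH]; first by rewrite /zeta2_sum /odd_zeta2_sum !big_geq // add0r mul0r.
  have zetaS n : zeta2_sum n.+1 = zeta2_sum n + (n.+1%:R ^+ 2)^-1.
    by rewrite /zeta2_sum big_nat_recr.
  rewrite doubleS !zetaS IH /odd_zeta2_sum big_nat_recr //=.
  have -> : ((M.*2.+2)%:R : R) ^+ 2 = 4 * M.+1%:R ^+ 2.
    by rewrite -doubleS -mul2n natrM exprMn; congr (_ * _); rewrite expr2 -natrM.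
  rewrite [(4 * _)^-1]invfM; ring.
have := split_parity D; have := odd_zeta2_sum_le D.
have : zeta2_sum D <= zeta2_sum D.*2.
  rewrite /zeta2_sum.
  apply: ler_sum_nat_widen => [k|]; first by rewrite invr_ge0 exprn_ge0.
  by rewrite ltnS -addnn leq_addr.
lra.
Qed.

End Basel.

Section SqfreeDensity.
Variable R : realType.

Local Notation Q M := ((count_sqfree M)%:R : R).
Local Notation w D := (zeta2_sum R D - 1).

Lemma sum_inv_sq_from2 D : (0 < D)%N -> \sum_(2 <= d < D.+1) (d%:R ^+ 2)^-1 = w D.
Proof. by move=> D0; rewrite /zeta2_sum [in RHS]big_ltn // expr1n invr1 addrC addKr. Qed.

Lemma zeta2_sum_sub1_ge0 D : (0 < D)%N -> 0 <= w D.
Proof.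
by move=> D0; rewrite -sum_inv_sq_from2 // sumr_ge0 // => d _; rewrite invr_ge0 exprn_ge0.
Qed.

Lemma zeta2_sum_sub1_le D : w D <= pi ^+ 2 / 6 - 1.
Proof. by rewrite lerD2r zeta2_sum_le. Qed.

Lemma zeta2_sum_sub1_lt1 D : w D < 1.
Proof. by have := zeta2_sum_sub1_le D; have := pi_sq_lt12 R; lra. Qed.

Lemma natr_divn_le m N : (0 < m)%N -> (N %/ m)%:R <= N%:R / m%:R :> R.
Proof. by move=> m0; rewrite ler_pdivlMr ?ltr0n // -natrM ler_nat leq_divM. Qed.

Lemma natr_divn_ge m N : (0 < m)%N -> N%:R / m%:R - 1 <= (N %/ m)%:R :> R.
Proof.
move=> m0; rewrite lerBlDr ler_pdivrMr ?ltr0n // natr1 -natrM ler_nat.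
exact/ltnW/ltn_ceil.
Qed.

Lemma inv_sqrD1_le (x : R) : 0 < x -> ((x + 1) ^+ 2)^-1 <= x^-1 - (x + 1)^-1.
Proof.
move=> x0; have x1 : x + 1 != 0 by rewrite gt_eqF // ltr_wpDr.
rewrite -subr_ge0 (_ : _ - _ = (x * (x + 1) ^+ 2)^-1).
  by rewrite invr_ge0 mulr_ge0 ?exprn_ge0 ?addr_ge0 ?ltW.
by field; rewrite x1 gt_eqF.
Qed.

Lemma sum_inv_sq_tail_le D j : (0 < D)%N ->
  \sum_(D.+1 <= d < (D + j).+1) (d%:R ^+ 2)^-1 <= D%:R^-1 - (D + j)%:R^-1 :> R.
Proof.
move=> D0; elim: j => [|j IH]; first by rewrite addn0 big_geq // subrr.
rewrite addnS big_nat_recr /=; last by rewrite ltnS leq_addr.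
have x0 : 0 < (D + j)%:R :> R by rewrite ltr0n addn_gt0 D0.
by rewrite -natr1; have := inv_sqrD1_le x0; lra.
Qed.

Lemma count_sqfree_split N D : (0 < D)%N ->
  N%:R = Q N + \sum_(2 <= d < D.+1) Q (N %/ (d * d)) +
         \sum_(D.+1 <= d < (N + D).+1) Q (N %/ (d * d)).
Proof.
move=> D0; rewrite -{1}(sum_count_sqfree_div_sq (leq_addr D N)) natr_sum.
rewrite (@big_cat_nat _ _ _ 2) //= ?ltnS ?addn_gt0 ?D0 ?orbT //.
rewrite big_nat1 muln1 divn1 -addrA (@big_cat_nat _ _ _ D.+1) //=.
by rewrite ltnS leq_addl.
Qed.

Lemma sum_div_sq N D : \sum_(2 <= d < D.+1) (N%:R / (d * d)%:R) =
  N%:R * \sum_(2 <= d < D.+1) (d%:R ^+ 2)^-1 :> R.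
Proof. by rewrite mulr_sumr; apply: eq_bigr => d _; rewrite natrM -expr2. Qed.

(* A linear lower bound on [Q] gives a linear upper bound: in [count_sqfree_split]
   the terms 2 <= d <= D are bounded below and the tail is nonnegative. *)
Lemma count_sqfree_upper l B D : 0 <= l -> (0 < D)%N ->
  (forall M, l * M%:R - B <= Q M) ->
  forall N, Q N <= (1 - l * w D) * N%:R + D%:R * (l + B).
Proof.
move=> l0 D0 lowQ N.
have B0 : 0 <= B by have := lowQ 0%N; rewrite count_sqfree0 /= mulr0; lra.
have tail_ge0 : 0 <= \sum_(D.+1 <= d < (N + D).+1) Q (N %/ (d * d)).
  by apply: sumr_ge0 => d _; rewrite ler0n.
have head_ge : \sum_(2 <= d < D.+1) (l * (N%:R / (d * d)%:R) - (l + B)) <=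
               \sum_(2 <= d < D.+1) Q (N %/ (d * d)).
  apply: ler_sum_nat => d /andP[d2 _]; apply: le_trans (lowQ _).
  have dd0 : (0 < d * d)%N by rewrite muln_gt0 andbb (ltn_trans _ d2).
  have := ler_wpM2l l0 (natr_divn_ge N dd0); lra.
have M3 : (l + B) * (D.-1)%:R <= D%:R * (l + B).
  by rewrite mulrC ler_wpM2r ?addr_ge0 // ler_nat leq_pred.
move: head_ge (count_sqfree_split N D0).
rewrite sumrB -mulr_sumr sum_div_sq sum_inv_sq_from2 // sumr_const_nat subSS subn1.
rewrite mulr_natr; lra.
Qed.

(* Conversely, a linear upper bound on [Q] gives a linear lower bound: now the tail
   d > D costs at most N/D by [sum_inv_sq_tail_le]. *)
Lemma count_sqfree_lower u B D : 0 <= u -> (0 < D)%N ->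
  (forall M, Q M <= u * M%:R + B) ->
  forall N, (1 - u * w D - D%:R^-1) * N%:R - D%:R * B <= Q N.
Proof.
move=> u0 D0 upQ N.
have B0 : 0 <= B by have := upQ 0%N; rewrite count_sqfree0 /= mulr0; lra.
have head_le : \sum_(2 <= d < D.+1) Q (N %/ (d * d)) <=
               \sum_(2 <= d < D.+1) (u * (N%:R / (d * d)%:R) + B).
  apply: ler_sum_nat => d /andP[d2 _]; apply: le_trans (upQ _) _.
  have dd0 : (0 < d * d)%N by rewrite muln_gt0 andbb (ltn_trans _ d2).
  have := ler_wpM2l u0 (natr_divn_le N dd0); lra.
have M3 : B * (D.-1)%:R <= D%:R * B by rewrite mulrC ler_wpM2r // ler_nat leq_pred.
have tail_le : \sum_(D.+1 <= d < (N + D).+1) Q (N %/ (d * d)) <= N%:R * D%:R^-1.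
  apply: le_trans (_ : N%:R * \sum_(D.+1 <= d < (D + N).+1) (d%:R ^+ 2)^-1 <= _).
    rewrite addnC mulr_sumr; apply: ler_sum_nat => d /andP[d2 _].
    have dd0 : (0 < d * d)%N by rewrite muln_gt0 andbb (leq_trans _ d2).
    apply: le_trans (_ : _ <= (N %/ (d * d))%:R) _; first by rewrite ler_nat count_sqfree_le.
    by apply: le_trans (natr_divn_le N dd0) _; rewrite natrM -expr2.
  apply: ler_wpM2l; first by rewrite ler0n.
  by apply: le_trans (sum_inv_sq_tail_le N D0) _; rewrite lerBlDr lerDl invr_ge0.
move: head_le (count_sqfree_split N D0).
rewrite big_split /= -mulr_sumr sum_div_sq sum_inv_sq_from2 // sumr_const_nat subSS subn1.
rewrite mulr_natr; have := zeta2_sum_sub1_ge0 D0; nra.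
Qed.

Definition sqfree_lower_densities : set R :=
  [set l | 0 <= l <= 1 /\ exists B, forall M, l * M%:R - B <= Q M].

Lemma sqfree_lower_densities0 : sqfree_lower_densities 0.
Proof. by split; [rewrite lexx ler01 | exists 0 => M; rewrite mul0r subr0 ler0n]. Qed.

Lemma has_sup_sqfree_lower_densities : has_sup sqfree_lower_densities.
Proof.
split; first by exists 0; apply: sqfree_lower_densities0.
by exists 1 => y [/andP[_]].
Qed.

(* One round of [count_sqfree_upper] followed by [count_sqfree_lower]. *)
Lemma sqfree_lower_density_improve l D : sqfree_lower_densities l -> (0 < D)%N ->
  exists2 l', sqfree_lower_densities l' & 1 - (1 - l * w D) * w D - D%:R^-1 <= l'.
Proof.
move=> [/andP[l0 l1] [B lowQ]] D0.
have c0 := zeta2_sum_sub1_ge0 D0; have c1 := zeta2_sum_sub1_lt1 D.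
have u0 : 0 <= 1 - l * w D by rewrite subr_ge0; nra.
have lowQ' := count_sqfree_lower u0 D0 (count_sqfree_upper l0 D0 lowQ).
have Di : 0 <= D%:R^-1 :> R by rewrite invr_ge0 ler0n.
case: (lerP 0 (1 - (1 - l * w D) * w D - D%:R^-1)) => l'0; last first.
  by exists 0; [apply: sqfree_lower_densities0 | apply: ltW].
exists (1 - (1 - l * w D) * w D - D%:R^-1) => //; split; last by eexists; apply: lowQ'.
by rewrite l'0 /=; nra.
Qed.

(* With c := w D, the supremum q satisfies q >= 1 - c - 1/D + c^2 q, so
   q >= 1/(1 + c) - 1/(D (1 - c^2)); moreover 1 + c <= pi^2/6 and
   1 - c^2 >= 1 - c >= 2 - pi^2/6. *)
Lemma sup_sqfree_lower_densities_ge D : (1 < D)%N ->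
  6 / pi ^+ 2 - D%:R^-1 / (2 - pi ^+ 2 / 6) <= sup sqfree_lower_densities.
Proof.
move=> D1; have D0 := ltnW D1; set q := sup _; set c := w D.
have c_gt0 : 0 < c.
  rewrite /c -(sum_inv_sq_from2 D0) big_ltn //= ltr_wpDr //.
  by apply: sumr_ge0 => d _; rewrite invr_ge0 exprn_ge0.
have c0 := ltW c_gt0.
have c1 : c < 1 := zeta2_sum_sub1_lt1 D.
have cle : c <= pi ^+ 2 / 6 - 1 := zeta2_sum_sub1_le D.
have pi_lt := pi_sq_lt12 R; have pi_ge := pi_sq_ge4 R.
set X := 1 - c - D%:R^-1.
have Xq l : sqfree_lower_densities l -> X + c ^+ 2 * l <= q.
  move=> Sl; have [l' Sl' l'_ge] := sqfree_lower_density_improve Sl D0.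
  apply: le_trans (sup_upper_bound has_sup_sqfree_lower_densities Sl').
  by rewrite (_ : X + _ = 1 - (1 - l * c) * c - D%:R^-1) // /X; ring.
have cc0 : 0 < c ^+ 2 by rewrite exprn_gt0.
have : q <= (q - X) / c ^+ 2.
  apply: ge_sup; first by exists 0; apply: sqfree_lower_densities0.
  by move=> l Sl; rewrite ler_pdivlMr // mulrC; have := Xq l Sl; lra.
rewrite ler_pdivlMr // => qX.
have oneDc : 0 < 1 - c ^+ 2 by rewrite subr_gt0 expr2; nra.
apply: le_trans (_ : X / (1 - c ^+ 2) <= q); last by rewrite ler_pdivrMr //; lra.
have -> : X / (1 - c ^+ 2) = 1 / (1 + c) - D%:R^-1 / (1 - c ^+ 2).
  have e1 : 1 + c != 0 by rewrite gt_eqF //; lra.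
  have e2 : (D%:R : R) != 0 by rewrite pnatr_eq0 -lt0n.
  by rewrite /X; field; rewrite e1 e2 gt_eqF.
apply: lerD.
  rewrite ler_pdivlMr ?mul1r; last lra.
  rewrite -ler_pdivlMl; last by rewrite divr_gt0 //; lra.
  by rewrite invf_div mulr1; lra.
rewrite lerN2 ler_pM2l ?invr_gt0 ?ltr0n // lef_pV2 ?posrE; nra.
Qed.

End SqfreeDensity.

Lemma ler_of_forall_sub_div (R : realType) (x y C : R) : 0 <= C ->
  (forall D, (1 < D)%N -> x - C / D%:R <= y) -> x <= y.
Proof.
move=> C0 xy; apply/ler_addgt0Pr => e e0.
set D := (Num.Def.archi_bound (C / e)).+2.
have D0 : 0 < D%:R :> R by rewrite ltr0n.
have CeD : C / e <= D%:R.
  apply/ltW/(lt_le_trans (archi_boundP _)); last by rewrite ler_nat /D; lia.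
  exact: divr_ge0 C0 (ltW e0).
have : C / D%:R <= e.
  by rewrite ler_pdivrMr // mulrC; move: CeD; rewrite ler_pdivrMr // mulrC.
by have := xy D isT; lra.
Qed.

Lemma sup_sqfree_lower_densities_ge_inv_zeta2 (R : realType) :
  6 / pi ^+ 2 <= sup (@sqfree_lower_densities R).
Proof.
apply: (@ler_of_forall_sub_div _ _ _ (2 - pi ^+ 2 / 6)^-1).
  by rewrite invr_ge0; have := pi_sq_lt12 R; lra.
by move=> D D1; rewrite [_ / D%:R]mulrC; apply: sup_sqfree_lower_densities_ge.
Qed.

Lemma sum_le_lim_series (R : realType) (u : R ^nat) (l : R) :
  (forall n, 0 <= u n) -> series u @ \oo --> l -> forall N, \sum_(0 <= k < N) u k <= l.
Proof.
move=> u0 ul N; rewrite -(cvg_lim (@Rhausdorff R) ul).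
apply: nondecreasing_cvgn_le; last by apply/cvg_ex; exists l.
by apply: nondecreasing_series => n _ _.
Qed.

Lemma limn_einf_EFin_ge (R : realType) (u : R ^nat) (x : R) :
  (forall e, 0 < e -> \forall n \near \oo, x - e <= u n) ->
  (x%:E <= limn_einf (fun n => (u n)%:E))%E.
Proof.
move=> ev; apply/lee_subgt0Pr => e e0; have [N _ uN] := ev e e0.
rewrite limn_einf_lim; apply: lime_ge; first exact: is_cvg_einfs.
near=> n; apply: le_ereal_inf_tmp => _ [k /= nk <-].
rewrite -EFinB lee_fin; apply: uN => /=; apply: leq_trans nk.
by near: n; apply: nbhs_infty_ge.
Unshelve. all: by end_near.
Qed.

Lemma avg_zfun_moebius_ge (R : realType) a (rho l B : R) N :
  (forall n, (0 < n)%N -> (0 < a n)%N) ->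
  (forall N, \sum_(0 <= r < N) (a r.+1)%:R^-1 <= rho) ->
  (forall M, l * M%:R - B <= (count_sqfree M)%:R) -> (0 < N)%N ->
  l - B / N%:R - 2 * rho <=
  N%:R^-1 * \sum_(1 <= k < N.+1) ((zfun a k * moebius k)%:~R : R).
Proof.
move=> apos rhoN lowQ N0; have Nr0 : 0 < N%:R :> R by rewrite ltr0n.
have -> : l - B / N%:R - 2 * rho = N%:R^-1 * (l * N%:R - B - 2 * (N%:R * rho)).
  by field; rewrite gt_eqF.
rewrite ler_pM2l ?invr_gt0 //; apply: le_trans (sum_zfun_moebius_ge R N apos).
have := lowQ N; have := rhoN N; rewrite -(ler_pM2l Nr0); lra.
Qed.

Theorem proposition6p2 (R : realType) (a : nat -> nat) (rho : R)
  (apos : forall n, (0 < n)%N -> (0 < a n)%N)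
  (aincr : forall n, (0 < n)%N -> (a n < a n.+1)%N)
  (adiv : forall n, (0 < n)%N -> (a n %| a n.+1)%N)
  (hrho : series (fun n : nat => ((a n.+1)%:R : R)^-1) @ \oo --> rho)
  (hrho4 : rho <= 1 / 4) :
  ((6 / pi ^+ 2 - 2 * rho)%:E <=
     limn_einf (fun N : nat =>
       ((N%:R)^-1 * \sum_(1 <= k < N.+1)
          ((zfun a k * moebius k)%:~R : R))%:E))%E
  /\ 0 < 6 / pi ^+ 2 - 2 * rho.
Proof.
have half_lt : 1 / 2 < 6 / (pi : R) ^+ 2.
  by rewrite ltr_pdivlMr ?exprn_gt0 ?pi_gt0 //; have := pi_sq_lt12 R; lra.
split; last by lra.
have a_inv_ge0 n : 0 <= ((a n.+1)%:R : R)^-1 by rewrite invr_ge0.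
have rhoN := sum_le_lim_series a_inv_ge0 hrho.
apply: limn_einf_EFin_ge => e e0.
have [l [_ [B lowQ]] l_gt] :=
  sup_adherent (divr_gt0 e0 (ltr0Sn _ 1)) (has_sup_sqfree_lower_densities R).
have q_ge := sup_sqfree_lower_densities_ge_inv_zeta2 R.
have B0 : 0 <= B by have := lowQ 0%N; rewrite count_sqfree0 /= mulr0; lra.
have Be0 : 0 <= 2 * B / e by rewrite divr_ge0 ?mulr_ge0 // ltW.
near=> N.
have BN : 2 * B / e < N%:R.
  apply: lt_le_trans (archi_boundP Be0) _; rewrite ler_nat.
  by near: N; apply: nbhs_infty_ge.
have N0 : 0 < N%:R :> R := le_lt_trans Be0 BN.
have N_gt0 : (0 < N)%N by rewrite -(ltr0n R).
have := avg_zfun_moebius_ge apos rhoN lowQ N_gt0.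
have : B / N%:R <= e / 2 by rewrite ler_pdivrMr //; move: BN; rewrite ltr_pdivrMr //; nra.
lra.
Unshelve. all: by end_near.
Qed.
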